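(* Let $\mathcal{H}$ be a commutative Hopf algebra over a field $\mathbb{K}$. If $\mathcal{H}$ is semisimple, then $\mathcal{H}$ has enough cocommutative elements (i.e. $\mathcal{R}_{\mathcal{H}}^+\mathcal{H}=\mathcal{H}^+$) and $\mathcal{R}_{\mathcal{H}}$ is a semisimple $\mathbb{K}$-algebra.
   Context: With $\Delta(h)=\sum h_{(1)}\otimes h_{(2)}$ and counit $\varepsilon$: $\mathcal{H}^+=\ker\varepsilon$, $\mathcal{R}_{\mathcal{H}}=\{r\in\mathcal{H}:\sum r_{(1)}\otimes r_{(2)}=\sum r_{(2)}\otimes r_{(1)}\}$ (a subalgebra), $\mathcal{R}_{\mathcal{H}}^+=\mathcal{R}_{\mathcal{H}}\cap\mathcal{H}^+$. *)

(* Hopf algebras over a field, without tensor-product library: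
   an element of H (x) H is represented by a finite list of pairs
   [(a_1,b_1);...] standing for sum a_i (x) b_i; two lists represent the same
   tensor iff every bilinear form H x H -> K takes the same value on them
   (linear functionals on H (x) H = bilinear forms, and over a field linear
   functionals separate points).  Same for H (x) H (x) H with trilinear forms. *)
From HB Require Import structures.
From mathcomp Require Import all_boot all_order all_algebra.
Set Implicit Arguments. Unset Strict Implicit. Unset Printing Implicit Defensive.
Import Order.TTheory GRing.Theory.
Local Open Scope ring_scope.

Section Hopf.
Variables (K : fieldType) (H : comAlgType K).

Definition bilinear_form (f : H -> H -> K) : Prop :=
  (forall (a : K) (x y z : H), f (a *: x + y) z = a * f x z + f y z) /\
  (forall (a : K) (x y z : H), f z (a *: x + y) = a * f z x + f z y).

Definition trilinear_form (f : H -> H -> H -> K) : Prop :=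
  (forall (a : K) (x y u v : H), f (a *: x + y) u v = a * f x u v + f y u v) /\
  (forall (a : K) (x y u v : H), f u (a *: x + y) v = a * f u x v + f u y v) /\
  (forall (a : K) (x y u v : H), f u v (a *: x + y) = a * f u v x + f u v y).

Definition teq2 (s t : seq (H * H)) : Prop :=
  forall f, bilinear_form f ->
    \sum_(p <- s) f p.1 p.2 = \sum_(p <- t) f p.1 p.2.

Definition teq3 (s t : seq (H * H * H)) : Prop :=
  forall f, trilinear_form f ->
    \sum_(p <- s) f p.1.1 p.1.2 p.2 = \sum_(p <- t) f p.1.1 p.1.2 p.2.

Definition hopf_algebra (D : H -> seq (H * H)) (e : H -> K) (S : H -> H) : Prop :=
  [/\
      [/\ (forall (a : K) (x y : H),
         teq2 (D (a *: x + y)) ([seq (a *: p.1, p.2) | p <- D x] ++ D y)),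
      teq2 (D 1) [:: (1, 1)] &
      (forall x y : H,
         teq2 (D (x * y)) [seq (p.1 * q.1, p.2 * q.2) | p <- D x, q <- D y])],
      (forall h : H,
         teq3 [seq (q.1, q.2, p.2) | p <- D h, q <- D p.1]
              [seq (p.1, q.1, q.2) | p <- D h, q <- D p.2]),
      [/\ (forall (a : K) (x y : H), e (a *: x + y) = a * e x + e y),
          e 1 = 1, (forall x y : H, e (x * y) = e x * e y),
          (forall h : H, \sum_(p <- D h) e p.1 *: p.2 = h) &
          (forall h : H, \sum_(p <- D h) e p.2 *: p.1 = h)] &
      [/\ (forall (a : K) (x y : H), S (a *: x + y) = a *: S x + S y),
          (forall h : H, \sum_(p <- D h) S p.1 * p.2 = (e h)%:A) &
          (forall h : H, \sum_(p <- D h) p.1 * S p.2 = (e h)%:A)]].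

Definition augmentation (e : H -> K) (h : H) : Prop := e h = 0.

Definition cocomm (D : H -> seq (H * H)) (r : H) : Prop :=
  teq2 (D r) [seq (p.2, p.1) | p <- D r].

Definition cocomm_plus (D : H -> seq (H * H)) (e : H -> K) (r : H) : Prop :=
  cocomm D r /\ augmentation e r.

Definition cocomm_plus_H (D : H -> seq (H * H)) (e : H -> K) (x : H) : Prop :=
  exists s : seq (H * H),
    (forall p, p \in s -> cocomm_plus D e p.1) /\ x = \sum_(p <- s) p.1 * p.2.

Definition enough_cocommutative (D : H -> seq (H * H)) (e : H -> K) : Prop :=
  forall x : H, cocomm_plus_H D e x <-> augmentation e x.

End Hopf.

Section Semisimple.
Variable (R : pzRingType).

Definition ideal_in (A I : R -> Prop) : Prop :=
  [/\ (forall x, I x -> A x), I 0,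
      (forall x y, I x -> I y -> I (x + y)) &
      (forall a x, A a -> I x -> I (a * x))].

Definition semisimple_on (A : R -> Prop) : Prop :=
  forall I, ideal_in A I ->
    exists J, [/\ ideal_in A J,
                  (forall x, A x -> exists i j, [/\ I i, J j & x = i + j]) &
                  (forall x, I x -> J x -> x = 0)].

Definition semisimple_ring : Prop := semisimple_on (fun _ => True).
End Semisimple.

From mathcomp Require Import all_boot all_order all_algebra ring.
From Stdlib Require Import Setoid Morphisms.
From HB Require Import structures.
Set Implicit Arguments. Unset Strict Implicit. Unset Printing Implicit Defensive.
Import GRing.Theory.
Local Open Scope ring_scope.

(* H^+ is an ideal of the semisimple ring H, so it has a unit i (x i = x on
   H^+), and j = 1 - i is a normalized integral: h j = e(h) j and e(j) = 1.
   Contracting the coassociativity of h against suitable forms shows that such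
   an integral is cocommutative; hence so is i, and H^+ = i H^+ lies in R^+ H.
   In a semisimple commutative ring every r has a quasi-inverse y (r y r = r,
   y r y = y), unique in any commutative semigroup.  As Delta and its flip are
   both multiplicative, Delta(y) and its flip are quasi-inverses of
   Delta(r) = flip Delta(r), so y is cocommutative with r: R_H is von Neumann
   regular.  For an ideal I of R_H, the unit u = sum r_k h_k of the ideal I H
   is fixed by a common local unit f in I of the r_k, so f is an idempotent
   with I = R_H f, complemented by the annihilator of f. *)

Section QuasiInverse.
Context {T : Type} (eqv : T -> T -> Prop) (mul : T -> T -> T)
  `{Equivalence T eqv} `{Proper _ (eqv ==> eqv ==> eqv) mul}.
Hypothesis mulC : forall x y, eqv (mul x y) (mul y x).
Hypothesis mulA : forall x y z, eqv (mul x (mul y z)) (mul (mul x y) z).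

Lemma quasi_inverse_unique a y z :
  eqv (mul (mul a y) a) a -> eqv (mul (mul y a) y) y ->
  eqv (mul (mul a z) a) a -> eqv (mul (mul z a) z) z -> eqv y z.
Proof.
move=> ay_a ya_y az_a za_z.
have ay_az : eqv (mul a y) (mul a z).
  transitivity (mul (mul a z) (mul a y)); first by rewrite mulA az_a; reflexivity.
  by rewrite mulC mulA ay_a; reflexivity.
transitivity (mul (mul a z) y).
  by rewrite -ay_az [mul a y]mulC ya_y; reflexivity.
transitivity (mul (mul a y) z); first by rewrite -!mulA [mul z y]mulC; reflexivity.
by rewrite ay_az [mul a z]mulC za_z; reflexivity.
Qed.
End QuasiInverse.

Section SemisimpleCommutative.
Variable R : comPzRingType.
Hypothesis R_ss : semisimple_ring R.

Lemma semisimple_ideal_unit (I : R -> Prop) : ideal_in (fun _ => True) I ->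
  exists2 u, I u & forall x, I x -> x * u = x.
Proof.
move=> I_ideal; have [J [[_ _ _ J_mul] decomp disjIJ]] := R_ss I_ideal.
have [u [v [Iu Jv uv1]]] := decomp 1 Logic.I.
exists u => // x Ix.
have xv0 : x * v = 0.
  by apply: disjIJ; [rewrite mulrC; case: I_ideal => _ _ _; apply | exact: J_mul].
by rewrite -[x in RHS]mulr1 uv1 mulrDr xv0 addr0.
Qed.

Lemma semisimple_quasi_inverse (r : R) : exists y, r * y * r = r /\ y * r * y = y.
Proof.
have rR_ideal : ideal_in (fun _ => True) (fun z => exists h, z = r * h).
  split=> //; first by exists 0; rewrite mulr0.
    by move=> _ _ [h1 ->] [h2 ->]; exists (h1 + h2); rewrite mulrDr.
  by move=> a _ _ [h ->]; exists (a * h); rewrite mulrCA.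
have [_ [h ->] rh_unit] := semisimple_ideal_unit rR_ideal.
have rhr : r * h * r = r by rewrite mulrAC -mulrA rh_unit //; exists 1; rewrite mulr1.
exists (h * r * h); split.
  have -> : r * (h * r * h) * r = r * h * r * h * r by ring.
  by rewrite !rhr.
have -> : h * r * h * r * (h * r * h) = h * (r * h * r * h * r) * h by ring.
by rewrite !rhr.
Qed.

End SemisimpleCommutative.

Definition ideal_span (R : pzRingType) (I : R -> Prop) (z : R) : Prop :=
  exists s : seq (R * R),
    (forall p, p \in s -> I p.1) /\ z = \sum_(p <- s) p.1 * p.2.

Lemma ideal_span_ideal (R : comPzRingType) (I : R -> Prop) :
  ideal_in (fun _ => True) (ideal_span I).
Proof.
split=> //; first by exists [::]; rewrite big_nil.
  move=> _ _ [s1 [s1I ->]] [s2 [s2I ->]]; exists (s1 ++ s2).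
  split; last by rewrite big_cat.
  by move=> p; rewrite mem_cat => /orP[/s1I | /s2I].
move=> a _ _ [s [sI ->]]; exists [seq (p.1, a * p.2) | p <- s]; split.
  by move=> q /mapP[p ps ->]; exact: (sI p ps).
by rewrite big_map mulr_sumr; apply: eq_bigr => p _; rewrite mulrCA.
Qed.

Section SemisimpleSubring.
Variables (R : comPzRingType) (A : R -> Prop).
Hypotheses (R_ss : semisimple_ring R) (A0 : A 0)
  (AD : forall x y, A x -> A y -> A (x + y)) (AN : forall x, A x -> A (- x))
  (AM : forall x y, A x -> A y -> A (x * y))
  (A_regular : forall r, A r -> exists2 y, A y & r * y * r = r).

(* For r in I and r y r = r, the element y r of I fixes r; such local units
   are merged by f1 + f - f1 f. *)
Lemma ideal_local_unit (I : R -> Prop) (s : seq R) : ideal_in A I ->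
  (forall z, z \in s -> I z) -> exists2 f, I f & forall z, z \in s -> z * f = z.
Proof.
move=> [IA I0 ID IM]; elim: s => [|r s IHs] sI; first by exists 0.
have [f1 If1 f1_unit] : exists2 f, I f & forall z, z \in s -> z * f = z.
  by apply: IHs => z zs; apply: sI; rewrite inE zs orbT.
have Ir : I r by apply: sI; rewrite mem_head.
have [y Ay ryr] := A_regular (IA _ Ir).
exists (f1 + (y * r + - f1 * (y * r))).
  have Iyr : I (y * r) by apply: IM.
  by apply: (ID) => //; apply: (ID) => //; apply: (IM) => //; apply/AN/IA.
have merge z : z * (f1 + (y * r + - f1 * (y * r))) =
               z * f1 + z * (y * r) - z * f1 * (y * r) by ring.
move=> z; rewrite inE => /predU1P[-> | zs].
  have rf1yr : r * f1 * (y * r) = r * f1 by rewrite mulrAC mulrA ryr.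
  by rewrite merge rf1yr mulrA ryr addrAC subrr add0r.
by rewrite merge f1_unit // addrK.
Qed.

Lemma semisimple_subring : semisimple_on A.
Proof.
move=> I I_ideal; have [IA I0 ID IM] := I_ideal.
have [u [s [sI u_def]] u_unit] := semisimple_ideal_unit R_ss (ideal_span_ideal I).
have sI1 z : z \in [seq p.1 | p <- s] -> I z by move=> /mapP[p ps ->]; exact: sI.
have [f If f_unit] := ideal_local_unit I_ideal sI1.
have uf : u * f = u.
  rewrite u_def mulr_suml; apply: eq_big_seq => p ps.
  by rewrite mulrAC f_unit // map_f.
have If_unit x : I x -> x * f = x.
  move=> Ix; have Ix_span : ideal_span I x.
    exists [:: (x, 1)]; rewrite big_seq1 mulr1.
    by split=> // p; rewrite inE => /eqP ->.
  by rewrite -{1}(u_unit x Ix_span) -mulrA uf u_unit.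
exists (fun z => A z /\ z * f = 0); split.
- split=> [x [] // | | x y [Ax xf] [Ay yf] | a x Aa [Ax xf]].
  + by rewrite mul0r.
  + by split; [apply: AD | rewrite mulrDl xf yf addr0].
  + by split; [apply: AM | rewrite -mulrA xf mulr0].
- move=> x Ax; exists (x * f), (x - x * f); split.
  + by apply: IM.
  + split; first by apply: AD; [|apply: AN; apply: AM; [|apply: IA]].
    by rewrite mulrBl -mulrA (If_unit f If) subrr.
  + by rewrite addrC subrK.
- by move=> x Ix [_ xf]; rewrite -(If_unit x Ix).
Qed.

End SemisimpleSubring.

Section BilinearForms.
Variables (K : fieldType) (H : comAlgType K) (f : H -> H -> K).
Hypothesis f_bilin : bilinear_form f.

Lemma form0l z : f 0 z = 0.
Proof.
have := f_bilin.1 1 0 0 z; rewrite scale1r addr0 mul1r.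
by rewrite -{1}[f 0 z]addr0 => /addrI.
Qed.

Lemma form0r z : f z 0 = 0.
Proof.
have := f_bilin.2 1 0 0 z; rewrite scale1r addr0 mul1r.
by rewrite -{1}[f z 0]addr0 => /addrI.
Qed.

Lemma formDl x y z : f (x + y) z = f x z + f y z.
Proof. by rewrite -[x]scale1r f_bilin.1 mul1r scale1r. Qed.

Lemma formDr x y z : f z (x + y) = f z x + f z y.
Proof. by rewrite -[x]scale1r f_bilin.2 mul1r scale1r. Qed.

Lemma formZl a x z : f (a *: x) z = a * f x z.
Proof. by rewrite -[a *: x]addr0 f_bilin.1 form0l addr0. Qed.

Lemma formZr a x z : f z (a *: x) = a * f z x.
Proof. by rewrite -[a *: x]addr0 f_bilin.2 form0r addr0. Qed.

Lemma form_suml (I : Type) (s : seq I) (F : I -> H) z :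
  f (\sum_(i <- s) F i) z = \sum_(i <- s) f (F i) z.
Proof. exact: (big_morph (f^~ z) (fun x y => formDl x y z) (form0l z)). Qed.

Lemma form_sumr (I : Type) (s : seq I) (F : I -> H) z :
  f z (\sum_(i <- s) F i) = \sum_(i <- s) f z (F i).
Proof. exact: (big_morph (f z) (fun x y => formDr x y z) (form0r z)). Qed.

Lemma bilinear_swap : bilinear_form (fun x y => f y x).
Proof. by split=> a x y z; rewrite /= ?f_bilin.1 ?f_bilin.2. Qed.

Lemma bilinear_comp (g1 g2 : H -> H) : linear g1 -> linear g2 ->
  bilinear_form (fun x y => f (g1 x) (g2 y)).
Proof.
by move=> g1_lin g2_lin; split=> a x y z /=;
  rewrite ?g1_lin ?g2_lin ?formDl ?formDr ?formZl ?formZr.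
Qed.

Lemma bilinear_sum_mul (t : seq (H * H)) :
  bilinear_form (fun x y => \sum_(q <- t) f (x * q.1) (y * q.2)).
Proof.
split=> a x y z /=; rewrite mulr_sumr -big_split; apply: eq_bigr => q _;
  by rewrite mulrDl -scalerAl ?formDl ?formDr ?formZl ?formZr.
Qed.

End BilinearForms.

Lemma mulr_linear (K : fieldType) (H : comAlgType K) (a : H) :
  linear (fun x : H => a * x).
Proof. by move=> c x y; rewrite mulrDr scalerAr. Qed.

Lemma mulr_linear_r (K : fieldType) (H : comAlgType K) (a : H) :
  linear (fun x : H => x * a).
Proof. by move=> c x y; rewrite mulrDl scalerAl. Qed.

Section TensorSquare.
Variables (K : fieldType) (H : comAlgType K).
Implicit Types s t u : seq (H * H).

Definition tmul s t := [seq (p.1 * q.1, p.2 * q.2) | p <- s, q <- t].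
Definition tswap s := [seq (p.2, p.1) | p <- s].

Lemma big_tmul (V : nmodType) s t (F : H * H -> V) :
  \sum_(p <- tmul s t) F p = \sum_(p <- s) \sum_(q <- t) F (p.1 * q.1, p.2 * q.2).
Proof. exact: big_allpairs_dep. Qed.

Lemma big_tswap (V : nmodType) s (F : H * H -> V) :
  \sum_(p <- tswap s) F p = \sum_(p <- s) F (p.2, p.1).
Proof. exact: big_map. Qed.

#[export] Instance teq2_Equivalence : Equivalence (@teq2 K H).
Proof. by split=> [s|s t st|s t u st tu] g g_bilin; rewrite ?st ?tu. Qed.

Lemma tmulC s t : teq2 (tmul s t) (tmul t s).
Proof.
move=> g _; rewrite !big_tmul exchange_big; apply: eq_bigr => p _.
by apply: eq_bigr => q _; rewrite [p.1 * _]mulrC [p.2 * _]mulrC.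
Qed.

Lemma tmulA s t u : teq2 (tmul s (tmul t u)) (tmul (tmul s t) u).
Proof.
move=> g _; rewrite !big_tmul; apply: eq_bigr => p _.
rewrite big_tmul; apply: eq_bigr => q _; apply: eq_bigr => r _.
by rewrite /= !mulrA.
Qed.

#[export] Instance tmul_Proper : Proper (@teq2 K H ==> @teq2 K H ==> @teq2 K H) tmul.
Proof.
have tmull s s' t : teq2 s s' -> teq2 (tmul s t) (tmul s' t).
  by move=> ss' g g_bilin; rewrite !big_tmul (ss' _ (bilinear_sum_mul g_bilin t)).
move=> s s' ss' t t' tt'; rewrite (tmull _ _ t ss') tmulC (tmull _ _ s' tt').
exact: tmulC.
Qed.

#[export] Instance tswap_Proper : Proper (@teq2 K H ==> @teq2 K H) tswap.
Proof. by move=> s t st g g_bilin; rewrite !big_tswap (st _ (bilinear_swap g_bilin)). Qed.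

Lemma tswap_tmul s t : teq2 (tswap (tmul s t)) (tmul (tswap s) (tswap t)).
Proof.
move=> g _; rewrite big_tswap !big_tmul big_tswap; apply: eq_bigr => p _.
by rewrite big_tswap.
Qed.

End TensorSquare.

Section HopfAlgebra.
Variables (K : fieldType) (H : comAlgType K)
  (D : H -> seq (H * H)) (e : H -> K) (S : H -> H).
Hypothesis hopfH : hopf_algebra D e S.
Implicit Types (f : H -> H -> K) (x y h r : H).

Lemma comul_lin a x y :
  teq2 (D (a *: x + y)) ([seq (a *: p.1, p.2) | p <- D x] ++ D y).
Proof. by case: hopfH => -[]. Qed.

Lemma comul1 : teq2 (D 1) [:: (1, 1)].
Proof. by case: hopfH => -[]. Qed.

Lemma comulM x y : teq2 (D (x * y)) (tmul (D x) (D y)).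
Proof. by case: hopfH => -[]. Qed.

Lemma coassoc h : teq3 [seq (q.1, q.2, p.2) | p <- D h, q <- D p.1]
                       [seq (p.1, q.1, q.2) | p <- D h, q <- D p.2].
Proof. by case: hopfH. Qed.

Lemma counit_lin : scalar e.
Proof. by case: hopfH => _ _ []. Qed.

Lemma counitM x y : e (x * y) = e x * e y.
Proof. by case: hopfH => _ _ []. Qed.

Lemma counit1 : e 1 = 1.
Proof. by case: hopfH => _ _ []. Qed.

Lemma counitl h : \sum_(p <- D h) e p.1 *: p.2 = h.
Proof. by case: hopfH => _ _ []. Qed.

Lemma counitr h : \sum_(p <- D h) e p.2 *: p.1 = h.
Proof. by case: hopfH => _ _ []. Qed.

Lemma antipode_lin : linear S.
Proof. by case: hopfH => _ _ _ []. Qed.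

Lemma antipoder h : \sum_(p <- D h) p.1 * S p.2 = (e h)%:A.
Proof. by case: hopfH => _ _ _ []. Qed.

HB.instance Definition _ := GRing.isLinear.Build K H K^o *%R e counit_lin.
HB.instance Definition _ := GRing.isLinear.Build K H H *:%R S antipode_lin.

Lemma counit_alg a : e a%:A = a.
Proof. by rewrite linearZ /= counit1 mulr1. Qed.

Lemma comul_form_scalar f : bilinear_form f ->
  scalar (fun x => \sum_(p <- D x) f p.1 p.2).
Proof.
move=> f_bilin a x y; rewrite (comul_lin a x y f_bilin) big_cat big_map mulr_sumr.
by congr (_ + _); apply: eq_bigr => p _; rewrite formZl.
Qed.

Lemma cocommE r : cocomm D r = teq2 (D r) (tswap (D r)).
Proof. by []. Qed.

Lemma cocommP r : cocomm D r <->
  forall f, bilinear_form f -> \sum_(p <- D r) f p.1 p.2 = \sum_(p <- D r) f p.2 p.1.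
Proof. by split=> rc f f_bilin; rewrite rc // big_tswap. Qed.

Lemma cocomm_lin a x y : cocomm D x -> cocomm D y -> cocomm D (a *: x + y).
Proof.
move=> /cocommP xc /cocommP yc; apply/cocommP => f f_bilin.
rewrite (comul_form_scalar f_bilin) (comul_form_scalar (bilinear_swap f_bilin)) /=.
by rewrite xc // yc.
Qed.

Lemma cocomm1 : cocomm D 1.
Proof. by rewrite /cocomm comul1. Qed.

Lemma cocomm0 : cocomm D 0.
Proof.
by rewrite -(addNr 1) -scaleN1r; apply: cocomm_lin; apply: cocomm1.
Qed.

Lemma cocommN x : cocomm D x -> cocomm D (- x).
Proof. by rewrite -[- x]addr0 -scaleN1r => xc; apply: cocomm_lin xc cocomm0. Qed.

Lemma cocommD x y : cocomm D x -> cocomm D y -> cocomm D (x + y).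
Proof. by move=> xc yc; rewrite -[x]scale1r; apply: cocomm_lin. Qed.

Lemma cocommM x y : cocomm D x -> cocomm D y -> cocomm D (x * y).
Proof. by rewrite !cocommE => xc yc; rewrite comulM tswap_tmul -xc -yc. Qed.

Lemma sum_comulZ f a x : bilinear_form f ->
  \sum_(p <- D (a *: x)) f p.1 p.2 = a * \sum_(p <- D x) f p.1 p.2.
Proof. by move=> f_bilin; apply: (scalable_linear (comul_form_scalar f_bilin)). Qed.

Lemma cocomm_quasi_inverse r y :
  cocomm D r -> r * y * r = r -> y * r * y = y -> cocomm D y.
Proof.
rewrite !cocommE => rc ryr yry.
apply: (quasi_inverse_unique (@tmulC K H) (@tmulA K H) (a := D r)).
- by rewrite -!comulM ryr; reflexivity.
- by rewrite -!comulM yry; reflexivity.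
- by rewrite rc -!tswap_tmul -!comulM ryr; reflexivity.
- by rewrite rc -!tswap_tmul -!comulM yry; reflexivity.
Qed.

Lemma semisimple_cocomm_regular r : semisimple_ring H ->
  cocomm D r -> exists2 y, cocomm D y & r * y * r = r.
Proof.
move=> H_ss rc; have [y [ryr yry]] := semisimple_quasi_inverse H_ss r.
by exists y => //; apply: cocomm_quasi_inverse rc ryr yry.
Qed.

Section Integral.
Variable j : H.
Hypothesis j_integral : forall x, x * j = e x *: j.

(* Both sides are obtained from the coassociativity of h by contracting with
   the trilinear form F, using the counit on one side and the antipode on the
   other. *)
Lemma integral_antipode_shift h f : bilinear_form f ->
  \sum_(p <- D j) f (h * p.1) p.2 = \sum_(p <- D j) f p.1 (S h * p.2).
Proof.
move=> f_bilin.
pose F u v w := \sum_(q <- D j) f (u * q.1) (S w * (v * q.2)).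
have F_trilin : trilinear_form F.
  split; [|split] => a x y u v; rewrite /F mulr_sumr -big_split;
    apply: eq_bigr => q _ /=.
  - by rewrite mulrDl -scalerAl (formDl f_bilin) (formZl f_bilin).
  - by rewrite mulrDl -scalerAl mulrDr -scalerAr (formDr f_bilin) (formZr f_bilin).
  - by rewrite linearP mulrDl -scalerAl (formDr f_bilin) (formZr f_bilin).
have := coassoc h F_trilin; rewrite !big_allpairs_dep.
have -> : \sum_(p <- D h) \sum_(q <- D p.2) F p.1 q.1 q.2 =
          \sum_(q <- D j) f (h * q.1) q.2.
  transitivity (\sum_(p <- D h) \sum_(q <- D j) f ((e p.2 *: p.1) * q.1) q.2).
    apply: eq_bigr => p _; rewrite /F exchange_big; apply: eq_bigr => q _ /=.
    rewrite -(form_sumr f_bilin).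
    have -> : \sum_(r <- D p.2) S r.2 * (r.1 * q.2) = e p.2 *: q.2.
      by rewrite -mulr_algl -antipoder mulr_suml; apply: eq_bigr => r _; ring.
    by rewrite (formZr f_bilin) -scalerAl (formZl f_bilin).
  rewrite exchange_big; apply: eq_bigr => q _ /=.
  by rewrite -(form_suml f_bilin) -mulr_suml counitr.
move=> <-.
have g_bilin (w : H) : bilinear_form (fun x y => f x (S w * y)).
  exact: (bilinear_comp (g1 := id) f_bilin (fun _ _ _ => erefl) (mulr_linear _)).
transitivity (\sum_(p <- D h) e p.1 * \sum_(q <- D j) f q.1 (S p.2 * q.2)).
  apply: eq_bigr => p _.
  rewrite -(sum_comulZ _ _ (g_bilin p.2)) -j_integral.
  by rewrite (comulM p.1 j (g_bilin p.2)) big_tmul.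
under eq_bigr do rewrite mulr_sumr.
rewrite exchange_big; apply: eq_bigr => q _ /=.
rewrite -[in RHS](counitl h) linear_sum mulr_suml (form_sumr f_bilin).
by apply: eq_bigr => p _; rewrite linearZ -scalerAl (formZr f_bilin).
Qed.

Lemma integral_twist f : e j = 1 -> bilinear_form f ->
  \sum_(q <- D j) \sum_(p <- D j) f (q.2 * p.1) (p.2 * q.1) =
  \sum_(p <- D j) f p.1 p.2.
Proof.
move=> ej f_bilin.
have antipode_j : \sum_(q <- D j) q.1 * S q.2 = 1 by rewrite antipoder ej scale1r.
transitivity (\sum_(q <- D j) \sum_(p <- D j) f p.1 (S q.2 * p.2 * q.1)).
  apply: eq_bigr => q _.
  exact: (integral_antipode_shift q.2 (bilinear_comp (g1 := id)
    (g2 := fun y => y * q.1) f_bilin (fun _ _ _ => erefl) (mulr_linear_r _))).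
rewrite exchange_big; apply: eq_bigr => p _ /=.
rewrite -(form_sumr f_bilin) -[in RHS](mul1r p.2) -antipode_j mulr_suml.
by congr (f _ _); apply: eq_bigr => q _; ring.
Qed.

(* Swapping the tensor factors of the twisted double sum only exchanges the two
   summation indices. *)
Lemma integral_cocomm : e j = 1 -> cocomm D j.
Proof.
move=> ej; apply/cocommP => f f_bilin.
rewrite -(integral_twist ej f_bilin) -(integral_twist ej (bilinear_swap f_bilin)).
by rewrite exchange_big.
Qed.

End Integral.

Lemma augmentation_ideal : ideal_in (fun _ => True) (augmentation e).
Proof.
rewrite /augmentation; split=> //; first exact: raddf0.
  by move=> x y ex ey; rewrite raddfD /= ex ey addr0.
by move=> a x _ ex; rewrite counitM ex mulr0.
Qed.

Lemma augmentation_cocomm_plus_H x : cocomm_plus_H D e x -> augmentation e x.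
Proof.
move=> [s [sR ->]]; rewrite /augmentation raddf_sum big1_seq // => p /andP[_ ps].
by rewrite /= counitM (sR p ps).2 mul0r.
Qed.

(* If i is a unit of the ideal H^+, then 1 - i is a normalized integral. *)
Lemma augmentation_unit_cocomm i : augmentation e i ->
  (forall x, augmentation e x -> x * i = x) -> cocomm D i.
Proof.
move=> ei i_unit.
have j_integral x : x * (1 - i) = e x *: (1 - i).
  have := i_unit (x - (e x)%:A).
  rewrite /augmentation raddfB /= counit_alg subrr => /(_ erefl).
  rewrite mulrBl -scalerAl mul1r => xi.
  by rewrite mulrBr mulr1 scalerBr -[x * i](subrK (e x *: i)) xi; ring.
have ej : e (1 - i) = 1 by rewrite raddfB /= counit1 ei subr0.
rewrite -(subKr 1 i); apply: cocommD cocomm1 (cocommN _).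
exact: integral_cocomm j_integral ej.
Qed.

End HopfAlgebra.

Theorem proposition2p31 (K : fieldType) (H : comAlgType K)
    (D : H -> seq (H * H)) (e : H -> K) (S : H -> H) :
  hopf_algebra D e S ->
  semisimple_ring H ->
  enough_cocommutative D e /\ semisimple_on (cocomm D).
Proof.
move=> hopfH H_ss; split.
  have [i ei i_unit] := semisimple_ideal_unit H_ss (augmentation_ideal hopfH).
  have ic := augmentation_unit_cocomm hopfH ei i_unit.
  move=> x; split; first exact: (augmentation_cocomm_plus_H hopfH).
  move=> ex; exists [:: (i, x)]; rewrite big_seq1 mulrC i_unit //.
  by split=> // p; rewrite inE => /eqP ->.
apply: semisimple_subring => //.
- exact: cocomm0 hopfH.
- exact: cocommD hopfH.
- exact: cocommN hopfH.
- exact: cocommM hopfH.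
- move=> r; exact: (semisimple_cocomm_regular hopfH H_ss).
Qed.
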